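(* For every $8$-uniform hypergraph $H=(V,E)$ with $m=|E|$, \[100\,\tau(H) \le 10.2854\,n_1 + 16.0254\,n_2 + 17.3256\,n_3 + 17.7171\,n_{\ge 4} + 17.7171\,m.\]
   Context: A hypergraph $H=(V,E)$ consists of a finite vertex set $V$ and a finite collection $E$ of subsets of $V$ (edges); it is $k$-uniform if every edge has exactly $k$ vertices. The degree of a vertex $v$ is the number of edges containing $v$. For $i\ge 1$, $n_i$ denotes the number of vertices of degree exactly $i$, and $n_{\ge i}=\sum_{j\ge i} n_j$. A transversal is a vertex set meeting every edge; $\tau(H)$ is the minimum size of a transversal. *)

From HB Require Import structures.
From mathcomp Require Import all_boot all_order all_algebra.
Set Implicit Arguments. Unset Strict Implicit. Unset Printing Implicit Defensive.

(* A hypergraph on the finite vertex type V is given by its edge collection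
   E : seq {set V} (a finite collection of subsets; repeated edges allowed). *)

Definition uniform (V : finType) (k : nat) (E : seq {set V}) : bool :=
  all (fun e : {set V} => #|e| == k) E.

Definition deg (V : finType) (E : seq {set V}) (v : V) : nat :=
  count (fun e : {set V} => v \in e) E.

Definition n_deg (V : finType) (E : seq {set V}) (i : nat) : nat :=
  #|[set v : V | deg E v == i]|.

Definition n_deg_ge (V : finType) (E : seq {set V}) (i : nat) : nat :=
  #|[set v : V | i <= deg E v]|.

Definition is_transversal (V : finType) (E : seq {set V}) (T : {set V}) : bool :=
  all (fun e : {set V} => T :&: e != set0) E.

(* tau(H): minimum size of a transversal (defaults to #|V| if none exists,
   which never happens when all edges are nonempty). *)
Definition tau (V : finType) (E : seq {set V}) : nat :=
  \big[minn/#|V|]_(T : {set V} | is_transversal E T) #|T|.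

From Pilot Require Import Defs.
From HB Require Import structures.
From mathcomp Require Import all_boot all_order all_algebra.
From mathcomp Require Import lra.
Import Order.TTheory GRing.Theory Num.Theory.
Set Implicit Arguments. Unset Strict Implicit. Unset Printing Implicit Defensive.
Local Open Scope ring_scope.

(* Greedy deletion with a potential.  Weight each vertex of degree d by w(d),
   where w is concave with w(0) = 0, and let Phi(H) = sum_v w(deg v) + c |E|.
   Deleting a vertex v of maximum degree d+1 together with its edges lowers
   tau by at most one.  Meanwhile Phi loses w(d+1) at v, c (d+1) for the edges,
   and at least w(d+1) - w(d) per unit of degree lost by any other vertex: by
   concavity every increment of w below d+1 is at least the last one, and the
   other vertices lose (k-1)(d+1) degrees in total.  For k = 8, the weights
   0, 10.2854, 14, 15.5, 16, 16, ... and c = 17.7171 make this loss at least 100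
   in every case, and they stay below the coefficients of the theorem. *)

Definition drop_vertex (V : finType) (v : V) (E : seq {set V}) : seq {set V} :=
  [seq e : {set V} <- E | v \notin e].

Section Hypergraphs.
Variable V : finType.
Implicit Types (E : seq {set V}) (T : {set V}) (u v : V).

Lemma tau_le_card E T : Defs.is_transversal E T -> (tau E <= #|T|)%N.
Proof. by move=> hT; rewrite -leEnat /tau -minEnat; apply: bigmin_le_cond. Qed.

Lemma tau_le_cardT E : (tau E <= #|V|)%N.
Proof. by rewrite -leEnat /tau -minEnat; apply: bigmin_le_id. Qed.

Lemma tau_nil : tau (V := V) [::] = 0%N.
Proof. by apply/eqP; rewrite -leqn0 -(cards0 V); apply: tau_le_card. Qed.

Lemma transversal_setU1_drop_vertex E v T :
  Defs.is_transversal (drop_vertex v E) T -> Defs.is_transversal E (v |: T).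
Proof.
move=> /allP hT; apply/allP => e eE; apply/set0Pn.
have [ve | vNe] := boolP (v \in e); first by exists v; rewrite !inE eqxx.
have /hT/set0Pn[x] : e \in drop_vertex v E by rewrite mem_filter vNe.
by rewrite inE => /andP[xT xe]; exists x; rewrite !inE xT xe orbT.
Qed.

Lemma tau_drop_vertex E v : (tau E <= (tau (drop_vertex v E)).+1)%N.
Proof.
rewrite {2}/tau; elim/big_ind: _ => [|x y hx hy|T hT].
- exact/leqW/tau_le_cardT.
- by rewrite /minn; case: ifP.
- apply: leq_trans (tau_le_card (transversal_setU1_drop_vertex hT)) _.
  by rewrite cardsU1 -add1n leq_add2r leq_b1.
Qed.

Lemma deg_drop_vertex_le E v u : (deg (drop_vertex v E) u <= deg E u)%N.
Proof. by rewrite /deg count_filter; apply: sub_count => e /andP[]. Qed.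

Lemma deg_drop_vertex_self E v : deg (drop_vertex v E) v = 0%N.
Proof. by rewrite /deg /drop_vertex; elim: E => //= e E IH; case: ifP => //= /negbTE ->. Qed.

Lemma size_drop_vertex E v : (size (drop_vertex v E) + deg E v)%N = size E.
Proof. by rewrite size_filter addnC /deg count_predC. Qed.

Lemma uniform_drop_vertex k E v : uniform k E -> uniform k (drop_vertex v E).
Proof. by move=> /allP hE; apply/allP => e; rewrite mem_filter => /andP[_ /hE]. Qed.

Lemma sum_deg_uniform k E : uniform k E -> (\sum_u deg E u)%N = (k * size E)%N.
Proof.
elim: E => [|e E IH] /=; first by rewrite big1 ?muln0.
case/andP => /eqP ke hE; rewrite mulnS -(IH hE) -ke /deg /= big_split /=.
by congr (_ + _)%N; rewrite -sum1_card [RHS]big_mkcond; apply: eq_bigr => u _; case: (u \in e).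
Qed.

End Hypergraphs.

Section GreedyBound.
Variables (R : realFieldType) (V : finType) (k : nat) (w : nat -> R) (c gain : R).
Hypotheses (k_gt0 : (0 < k)%N) (w0 : w 0 = 0) (gain_ge0 : 0 <= gain).
Hypothesis w_concave : forall i, w i.+2 - w i.+1 <= w i.+1 - w i.
Hypothesis gain_le : forall d,
  gain <= w d.+1 + (w d.+1 - w d) * (k.-1 * d.+1)%:R + c * d.+1%:R.
Implicit Types (E : seq {set V}) (u v : V).

Lemma w_increment_noninc i j : (i <= j)%N -> w j.+1 - w j <= w i.+1 - w i.
Proof.
elim: j => [|j IH]; first by rewrite leqn0 => /eqP ->.
rewrite leq_eqVlt => /orP[/eqP -> // | /IH]; exact: le_trans (w_concave j).
Qed.

Lemma w_secant a b d : (a <= b <= d.+1)%N ->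
  w a + (w d.+1 - w d) * (b%:R - a%:R) <= w b.
Proof.
case/andP=> ab; rewrite -(subnKC ab) natrD addrAC subrr add0r.
elim: (b - a)%N => [|n IH] hd; first by rewrite mulr0 addr0 addn0.
have lt_d : (a + n <= d)%N by rewrite -ltnS -addnS.
have := w_increment_noninc lt_d; rewrite addnS -natr1 mulrDr mulr1.
have := IH (leqW lt_d); lra.
Qed.

Definition potential E : R := \sum_u w (deg E u) + c * (size E)%:R.

Lemma sum_deg_loss E v : uniform k E ->
  \sum_(u | u != v) ((deg E u)%:R - (deg (drop_vertex v E) u)%:R)
    = (k.-1 * deg E v)%:R :> R.
Proof.
move=> hE; set E' := drop_vertex v E.
have sumE : \sum_u (deg E u)%:R = (k * (size E' + deg E v))%:R :> R.
  by rewrite size_drop_vertex -natr_sum (sum_deg_uniform hE).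
have sumE' : \sum_u (deg E' u)%:R = (k * size E')%:R :> R.
  by rewrite -natr_sum (sum_deg_uniform (uniform_drop_vertex v hE)).
have := sumrB (index_enum V) xpredT (fun u => (deg E u)%:R) (fun u => (deg E' u)%:R : R).
rewrite sumE sumE' (bigD1 v) //= deg_drop_vertex_self -(prednK k_gt0).
rewrite succnK !natrM natrD -natr1; lra.
Qed.

Lemma potential_drop_vertex E v : uniform k E -> (forall u, deg E u <= deg E v)%N ->
  (0 < deg E v)%N -> potential (drop_vertex v E) + gain <= potential E.
Proof.
move=> hE vmax d_gt0; set E' := drop_vertex v E.
have [d dE] : exists d, deg E v = d.+1 by exists (deg E v).-1; rewrite prednK.
have secant u : u != v ->
    w (deg E' u) + (w d.+1 - w d) * ((deg E u)%:R - (deg E' u)%:R) <= w (deg E u).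
  by move=> _; apply: w_secant; rewrite deg_drop_vertex_le -dE vmax.
have := ler_sum (index_enum V) secant.
rewrite big_split /= -mulr_sumr sum_deg_loss // dE natrM => loss.
have := gain_le d; rewrite natrM => gain_d.
rewrite /potential (bigD1 v (F := fun u => w (deg E u))) //.
rewrite (bigD1 v (F := fun u => w (deg E' u))) //= deg_drop_vertex_self w0 dE.
rewrite -(size_drop_vertex E v) -/E' dE natrD; lra.
Qed.

Lemma greedy_bound E : uniform k E -> gain * (tau E)%:R <= potential E.
Proof.
have [n] := ubnP (size E); elim: n E => // n IH [|e E0] hn hE.
  by rewrite tau_nil mulr0 /potential mulr0 addr0 big1.
set E := e :: E0.
have /card_gt0P [x0 x0e] : (0 < #|e|)%N by case/andP: hE => /eqP ->.
have [v _ vmax] := @arg_maxnP V x0 xpredT (deg E) isT.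
have d_gt0 : (0 < deg E v)%N by apply: leq_trans (vmax x0 isT); rewrite /deg /= x0e.
have size_lt : (size (drop_vertex v E) < n)%N.
  by rewrite -ltnS (leq_trans _ hn) // -(size_drop_vertex E v) ltnS -addn1 leq_add2l.
have := IH _ size_lt (uniform_drop_vertex v hE).
have := potential_drop_vertex hE (fun u => vmax u isT) d_gt0.
have : gain * (tau E)%:R <= gain * ((tau (drop_vertex v E))%:R + 1).
  by rewrite ler_wpM2l // natr1 ler_nat tau_drop_vertex.
lra.
Qed.

End GreedyBound.

Lemma sum_scaled_indicator (R : pzSemiRingType) (V : finType) (a : R) (P : pred V) :
  \sum_u a * (P u)%:R = a * #|[set u | P u]|%:R.
Proof.
rewrite -mulr_sumr -natr_sum -sum1_card [in RHS]big_mkcond /=.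
by congr (_ * _%:R); apply: eq_bigr => u _; rewrite inE; case: (P u).
Qed.

Lemma sum_le_degree_counts (R : numDomainType) (V : finType) (E : seq {set V})
    (w : nat -> R) (a1 a2 a3 a4 : R) :
  (forall d, w d <= a1 * (d == 1)%:R + a2 * (d == 2)%:R + a3 * (d == 3)%:R + a4 * (4 <= d)%:R) ->
  \sum_u w (deg E u) <=
    a1 * (n_deg E 1)%:R + a2 * (n_deg E 2)%:R + a3 * (n_deg E 3)%:R + a4 * (n_deg_ge E 4)%:R.
Proof.
move=> w_le; rewrite /n_deg /n_deg_ge -!sum_scaled_indicator -!big_split.
by apply: ler_sum => u _; apply: w_le.
Qed.

Definition deg_weight (d : nat) : rat :=
  match d with
  | 0 => 0 | 1 => 102854%:R / 10000%:R | 2 => 14%:R | 3 => 31%:R / 2%:R | _ => 16%:R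
  end.

Lemma deg_weight_concave i :
  deg_weight i.+2 - deg_weight i.+1 <= deg_weight i.+1 - deg_weight i.
Proof. by case: i => [|[|[|[|i]]]]; rewrite /deg_weight; lra. Qed.

Lemma deg_weight_gain d :
  100%:R <= deg_weight d.+1 + (deg_weight d.+1 - deg_weight d) * (7 * d.+1)%:R
            + 177171%:R / 10000%:R * d.+1%:R.
Proof.
case: d => [|[|[|[|d]]]]; rewrite /deg_weight natrM; try lra.
have : 5%:R <= (d.+1.+4)%:R :> rat by rewrite ler_nat.
lra.
Qed.

Lemma deg_weight_le d :
  deg_weight d <= 102854%:R / 10000%:R * (d == 1)%:R + 160254%:R / 10000%:R * (d == 2)%:R
    + 173256%:R / 10000%:R * (d == 3)%:R + 177171%:R / 10000%:R * (4 <= d)%:R.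
Proof. by case: d => [|[|[|[|d]]]]; simpl nat_of_bool; rewrite /deg_weight; lra. Qed.

Theorem mainTheorem4 (V : finType) (E : seq {set V}) :
  uniform 8 E ->
  100%:R * (tau E)%:R <=
    (102854%:R / 10000%:R) * (n_deg E 1)%:R
  + (160254%:R / 10000%:R) * (n_deg E 2)%:R
  + (173256%:R / 10000%:R) * (n_deg E 3)%:R
  + (177171%:R / 10000%:R) * (n_deg_ge E 4)%:R
  + (177171%:R / 10000%:R) * (size E)%:R :> rat.
Proof.
move=> hE.
have := greedy_bound (k := 8) (w := deg_weight) (c := 177171%:R / 10000%:R) (gain := 100%:R)
  isT (erefl _) (ler0n _ 100) deg_weight_concave deg_weight_gain hE.
have := sum_le_degree_counts E deg_weight_le.
rewrite /potential; lra.
Qed.
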